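(* Let PS1 and PS2 be pure strategies (as in the context) with $m_{PS1}$ finite, and suppose PS2 is equivalent to PS1, i.e. $\Delta_{PS1}(X)=\Delta_{PS2}(X)$ for every $X\in\mathcal{S}_{\mathrm{non}}$. Then for any mixed strategy MS derived from PS1 and PS2, $m_{MS}(X)=m_{PS1}(X)$ for every initial population $X$.
   Context: A fitness function $f$ on a finite set is to be maximised. A metaheuristic generates populations $\Phi_0,\Phi_1,\dots$. Let $\mathcal{S}$ be the finite set of all populations, $\mathcal{S}_{\mathrm{opt}}$ those containing at least one optimal solution, $\mathcal{S}_{\mathrm{non}}=\mathcal{S}\setminus\mathcal{S}_{\mathrm{opt}}$. The sequence is a time-homogeneous Markov chain on $\mathcal{S}$ with transition probabilities $P(X,Y)=\Pr(\Phi_{t+1}=Y\mid\Phi_t=X)$, every state of $\mathcal{S}_{\mathrm{opt}}$ absorbing. The expected hitting time $m(X)\in[0,\infty]$ is the expected number of generations until first entering $\mathcal{S}_{\mathrm{opt}}$ from $\Phi_0=X$ ($m(X)=0$ on $\mathcal{S}_{\mathrm{opt}}$). A pure strategy is such a time-independent transition matrix. PS1, PS2 are pure strategies with transition matrices $P_1,P_2$ on the same $\mathcal{S}$ (with $\mathcal{S}_{\mathrm{opt}}$ absorbing), expected hitting times $m_{PS1},m_{PS2}$. A mixed strategy MS derived from PS1 and PS2 assigns to each $X\in\mathcal{S}$ probabilities $P_X(PS1)\in[0,1]$, $P_X(PS2)=1-P_X(PS1)$, and has transition matrix $P_{MS}(X,Y)=P_X(PS1)P_1(X,Y)+P_X(PS2)P_2(X,Y)$,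 with expected hitting time $m_{MS}$. With $d(X)=m_{PS1}(X)$, for $X\in\mathcal{S}_{\mathrm{non}}$: $\Delta_{PS1}(X)=d(X)-\sum_{Y\in\mathcal{S}_{\mathrm{non}}}P_1(X,Y)d(Y)$, $\Delta_{PS2}(X)=d(X)-\sum_{Y\in\mathcal{S}_{\mathrm{non}}}P_2(X,Y)d(Y)$. *)

From HB Require Import structures.
From mathcomp Require Import all_boot all_order all_algebra.
From mathcomp Require Import all_classical all_reals all_analysis.
Set Implicit Arguments. Unset Strict Implicit. Unset Printing Implicit Defensive.
Import Order.TTheory GRing.Theory Num.Theory.
Local Open Scope ring_scope.

Definition transition (R : realType) (S : finType) (Sopt : {set S})
    (P : S -> S -> R) : Prop :=
  (forall X Y, 0 <= P X Y) /\
  (forall X, \sum_(Y : S) P X Y = 1) /\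
  (forall X, X \in Sopt -> P X X = 1).

(* surv P Sopt t X = Pr(Phi_0, ..., Phi_t all lie in S_non | Phi_0 = X)
   = Pr(T > t | Phi_0 = X), T the first hitting time of Sopt. *)
Fixpoint surv (R : realType) (S : finType) (Sopt : {set S})
    (P : S -> S -> R) (t : nat) (X : S) : R :=
  match t with
  | 0 => if X \in Sopt then 0 else 1
  | t'.+1 => if X \in Sopt then 0
             else \sum_(Y : S) P X Y * surv Sopt P t' Y
  end.

(* Expected hitting time m(X) = E[T | Phi_0 = X] = sum_{t >= 0} Pr(T > t),
   valued in [0, +oo] (extended reals). It is 0 on Sopt. *)
Definition hitting_time (R : realType) (S : finType) (Sopt : {set S})
    (P : S -> S -> R) (X : S) : \bar R :=
  (\sum_(0 <= t <oo) (surv Sopt P t X)%:E)%E.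

Definition mixed_matrix (R : realType) (S : finType) (pX : S -> R)
    (P1 P2 : S -> S -> R) : S -> S -> R :=
  fun X Y => pX X * P1 X Y + (1 - pX X) * P2 X Y.

Definition drift (R : realType) (S : finType) (Sopt : {set S})
    (d : S -> R) (P : S -> S -> R) (X : S) : R :=
  d X - \sum_(Y in ~: Sopt) P X Y * d Y.

(** The expected hitting time [d := m_PS1] solves the first-step equations
    [d X = 1 + sum_Y P X Y * d Y] off [Sopt] for [P1]; having the same drift
    under [P2] says exactly that it solves them for [P2] as well, and these
    equations are preserved by any state-wise convex mixture of the two
    matrices.  It remains to see that a nonnegative solution of the first-step
    equations of a chain is its expected hitting time: unfolding the equation
    [n] times writes [d X] as [Pr(T > 0) + ... + Pr(T > n - 1)] plus the
    residual [E[d(Phi_n); T > n]], which is at most [(sum_Y d Y) * Pr(T > n)].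
    So [d X - m X] lies below every residual, while the residuals are
    summable; hence the gap is not positive. *)

From HB Require Import structures.
From mathcomp Require Import all_boot all_order all_algebra.
From mathcomp Require Import all_classical all_reals all_analysis.
From mathcomp Require Import ring lra.
Import Order.TTheory GRing.Theory Num.Theory.
Set Implicit Arguments. Unset Strict Implicit. Unset Printing Implicit Defensive.
Local Open Scope ring_scope.

Lemma natmul_bounded_le0 (R : archiRealFieldType) (c B : R) :
  (forall N, c *+ N <= B) -> c <= 0.
Proof.
move=> cB; rewrite leNgt; apply/negP => c_gt0.
have B_ge0 : 0 <= B by have := cB 0%N; rewrite mulr0n.
have := archi_boundP (divr_ge0 B_ge0 (ltW c_gt0)).
rewrite ltr_pdivrMr // mulr_natl => /lt_le_trans/(_ (cB _)).
by rewrite ltxx.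
Qed.

Section FirstStepEquations.

Variables (R : realType) (S : finType) (Sopt : {set S}).

Definition hitting_eq (P : S -> S -> R) (d : S -> R) : Prop :=
  (forall X, X \in Sopt -> d X = 0) /\
  (forall X, X \notin Sopt -> d X = 1 + \sum_Y P X Y * d Y).

Lemma drift_hitting_eq (P : S -> S -> R) (d : S -> R) X :
  (forall Y, Y \in Sopt -> d Y = 0) -> X \notin Sopt ->
  (drift Sopt d P X = 1) <-> (d X = 1 + \sum_Y P X Y * d Y).
Proof.
move=> d0 XS; have sum_off_opt : \sum_(Y in ~: Sopt) P X Y * d Y = \sum_Y P X Y * d Y.
  rewrite big_mkcond; apply: eq_bigr => Y _.
  by rewrite inE; case: ifPn => // /negPn /d0 ->; rewrite mulr0.
by rewrite /drift sum_off_opt; split=> [<-|->]; rewrite ?subrK ?addrK.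
Qed.

Lemma hitting_eq_mixed (pX : S -> R) (P1 P2 : S -> S -> R) (d : S -> R) :
  hitting_eq P1 d -> hitting_eq P2 d -> hitting_eq (mixed_matrix pX P1 P2) d.
Proof.
move=> [d0 dP1] [_ dP2]; split=> // X XS.
rewrite /mixed_matrix.
under eq_bigr do rewrite mulrDl -!mulrA.
rewrite big_split -!mulr_sumr /=.
have sum1 : \sum_Y P1 X Y * d Y = d X - 1 by rewrite (dP1 X XS) addrC addKr.
have sum2 : \sum_Y P2 X Y * d Y = d X - 1 by rewrite (dP2 X XS) addrC addKr.
by rewrite sum1 sum2; ring.
Qed.

Lemma mixed_matrix_ge0 (pX : S -> R) (P1 P2 : S -> S -> R) :
  (forall X, 0 <= pX X <= 1) ->
  (forall X Y, 0 <= P1 X Y) -> (forall X Y, 0 <= P2 X Y) ->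
  forall X Y, 0 <= mixed_matrix pX P1 P2 X Y.
Proof.
move=> pX01 P1_ge0 P2_ge0 X Y; have /andP[pX0 pX1] := pX01 X.
by rewrite addr_ge0 // mulr_ge0 // subr_ge0.
Qed.

Variables (P : S -> S -> R).
Hypothesis P_ge0 : forall X Y, 0 <= P X Y.

Lemma surv_ge0 t X : 0 <= surv Sopt P t X.
Proof.
elim: t X => [|t IH] X /=; case: ifP => // _.
by apply: sumr_ge0 => Y _; apply: mulr_ge0.
Qed.

Lemma surv_opt t X : X \in Sopt -> surv Sopt P t X = 0.
Proof. by case: t => [|t] /= ->. Qed.

Lemma hitting_time_ge0 X : (0 <= hitting_time Sopt P X)%E.
Proof. by apply: nneseries_ge0 => t _ _; rewrite lee_fin surv_ge0. Qed.

Lemma hitting_time_opt X : X \in Sopt -> hitting_time Sopt P X = 0%E.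
Proof. by move=> XS; rewrite /hitting_time eseries0 // => t _ _; rewrite surv_opt. Qed.

Lemma hitting_time_step X : X \notin Sopt ->
  hitting_time Sopt P X = (1 + \sum_Y (P X Y)%:E * hitting_time Sopt P Y)%E.
Proof.
move=> XS; have surv_ge0E t Y : (0 <= (surv Sopt P t Y)%:E)%E.
  by rewrite lee_fin surv_ge0.
rewrite /hitting_time nneseries_recl // /= (negbTE XS); congr (_ + _)%E.
rewrite -nneseries_addn //.
under eq_eseriesr => t _ do rewrite addn1 /= (negbTE XS) -sumEFin.
rewrite nneseries_sum => [|Y t _]; last by rewrite lee_fin mulr_ge0 ?surv_ge0.
apply: eq_bigr => Y _; under eq_eseriesr => t _ do rewrite EFinM.
by rewrite nneseriesZl.
Qed.

Lemma hitting_eq_hitting_time :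
  (forall X, hitting_time Sopt P X \is a fin_num) ->
  hitting_eq P (fun X => fine (hitting_time Sopt P X)).
Proof.
move=> fin; split=> [X /hitting_time_opt -> //|X XS].
apply: EFin_inj; rewrite fineK // hitting_time_step // EFinD -sumEFin.
by congr (_ + _)%E; apply: eq_bigr => Y _; rewrite EFinM fineK.
Qed.

Variables (d : S -> R).
Hypotheses (d_ge0 : forall X, 0 <= d X) (dE : hitting_eq P d).

(* [residual n X] is [E[d(Phi_n); T > n]] for the chain started at [X]. *)
Fixpoint residual (n : nat) (X : S) : R :=
  if X \in Sopt then 0
  else if n is n'.+1 then \sum_Y P X Y * residual n' Y else d X.

Lemma hitting_eq_unfold n X :
  d X = \sum_(t < n) surv Sopt P t X + residual n X.
Proof.
elim: n X => [|n IH] X /=.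
  by rewrite big_ord0 add0r; case: ifPn => [/dE.1|].
case: ifPn => XS.
  by rewrite addr0 dE.1 // big1 // => t _; rewrite surv_opt.
rewrite big_ord_recl /= (negbTE XS) exchange_big /= {1}(dE.2 X XS) -addrA.
congr (_ + _); rewrite -big_split; apply: eq_bigr => Y _ /=.
by under eq_bigr do rewrite add0n; rewrite -mulr_sumr -mulrDr -IH.
Qed.

Lemma residual_ge0 n X : 0 <= residual n X.
Proof.
elim: n X => [|n IH] X /=; case: ifP => // _.
by apply: sumr_ge0 => Y _; rewrite mulr_ge0.
Qed.

Lemma residual_le n X : residual n X <= (\sum_Y d Y) * surv Sopt P n X.
Proof.
elim: n X => [|n IH] X /=; case: ifP => _; rewrite ?mulr0 // ?mulr1.
  by rewrite (bigD1 X) //= lerDl sumr_ge0.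
rewrite mulr_sumr; apply: ler_sum => Y _.
by rewrite mulrCA ler_wpM2l.
Qed.

Lemma partial_surv_le n X : \sum_(t < n) surv Sopt P t X <= d X.
Proof. by rewrite [leRHS](hitting_eq_unfold n) lerDl residual_ge0. Qed.

Lemma hitting_time_partial_ge n X :
  ((\sum_(t < n) surv Sopt P t X)%:E <= hitting_time Sopt P X)%E.
Proof.
rewrite -sumEFin -(big_mkord xpredT (fun t => (surv Sopt P t X)%:E)).
by apply: nneseries_lim_ge => t _ _; rewrite lee_fin surv_ge0.
Qed.

Lemma hitting_time_le X : (hitting_time Sopt P X <= (d X)%:E)%E.
Proof.
apply: lime_le; first by apply: is_cvg_nneseries => t _ _; rewrite lee_fin surv_ge0.
by apply: nearW => n; rewrite sumEFin big_mkord lee_fin partial_surv_le.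
Qed.

Lemma hitting_timeE X : hitting_time Sopt P X = (d X)%:E.
Proof.
have ht_fin : hitting_time Sopt P X \is a fin_num.
  by rewrite ge0_fin_numE ?hitting_time_ge0 // (le_lt_trans (hitting_time_le X)) ?ltry.
rewrite -(fineK ht_fin); congr _%:E; set L := fine _.
have L_le : L <= d X by rewrite -lee_fin fineK ?hitting_time_le.
have L_ge n : \sum_(t < n) surv Sopt P t X <= L.
  by rewrite -lee_fin fineK ?hitting_time_partial_ge.
set M := \sum_Y d Y.
have gap_le n : d X - L <= M * surv Sopt P n X.
  rewrite {1}(hitting_eq_unfold n X) addrAC; apply: le_trans (residual_le n X).
  by rewrite gerDr subr_le0.
suff : d X - L <= 0 by lra.
apply: (@natmul_bounded_le0 _ _ (M * L)) => N.
rewrite -[in X in _ *+ X](card_ord N) -sumr_const.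
apply: (@le_trans _ _ (M * \sum_(t < N) surv Sopt P t X)).
  by rewrite mulr_sumr; apply: ler_sum => t _; apply: gap_le.
by rewrite ler_wpM2l ?sumr_ge0.
Qed.

End FirstStepEquations.

Theorem lemma2 (R : realType) (S : finType) (Sopt : {set S})
    (P1 P2 : S -> S -> R) (pX : S -> R) :
  transition Sopt P1 -> transition Sopt P2 ->
  (forall X, 0 <= pX X <= 1) ->
  (forall X, hitting_time Sopt P1 X \is a fin_num) ->
  (forall X, X \in ~: Sopt ->
     drift Sopt (fun Y => fine (hitting_time Sopt P1 Y)) P1 X =
     drift Sopt (fun Y => fine (hitting_time Sopt P1 Y)) P2 X) ->
  forall X, hitting_time Sopt (mixed_matrix pX P1 P2) X = hitting_time Sopt P1 X.
Proof.
move=> [P1_ge0 _] [P2_ge0 _] pX01 P1_fin same_drift X.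
set d := fun Y => fine (hitting_time Sopt P1 Y).
have dE1 : hitting_eq Sopt P1 d := hitting_eq_hitting_time P1_ge0 P1_fin.
have dE2 : hitting_eq Sopt P2 d.
  split=> [|Y YS]; first exact: dE1.1.
  apply/(drift_hitting_eq _ dE1.1 YS); rewrite -same_drift ?inE //.
  exact/(drift_hitting_eq _ dE1.1 YS)/dE1.2.
have d_ge0 Y : 0 <= d Y by rewrite fine_ge0 ?hitting_time_ge0.
have Q_ge0 := mixed_matrix_ge0 pX01 P1_ge0 P2_ge0.
by rewrite (hitting_timeE Q_ge0 d_ge0 (hitting_eq_mixed pX dE1 dE2)) fineK.
Qed.
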